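(* With the notation below, the exact sequence of $G$-spaces $$0\to\ell_2(T)\to\ell_2(T)\oplus\ell_2(T)\to\ell_2(T)\to0,$$ where $G=\mathrm{Aut}(T)$ acts on both end spaces by $u$ and on the middle space by $\lambda(g)=\begin{pmatrix}u(g)&u(g)L-Lu(g)\\0&u(g)\end{pmatrix}$, does not $G$-split (there is no bounded linear $G$-equivariant right inverse of the quotient map, equivalently no bounded $G$-equivariant projection onto the first summand), although it splits as an exact sequence of Banach spaces.
   Context: $F_\infty$ is the free group on generators $a_1,a_2,\dots$; $T$ is its Cayley graph (a tree, vertices the reduced words, rooted at the empty word $\emptyset$); for $t\ne\emptyset$, $\hat t$ is $t$ with its last letter deleted. $G=\mathrm{Aut}(T)$ is the group of graph automorphisms of $T$, acting by $u(g)x=(x(g^{-1}t))_{t\in T}$ on $\mathbb C^T$, $\ell_1(T)$, $\ell_2(T)$. $L:\ell_1(T)\to\ell_1(T)$ is given by $Le_t=e_{\hat t}$ ($t\ne\emptyset$), $Le_\emptyset=0$. It is known (Pytlik–Szwarc) that $u(g)L-Lu(g)$ extends to a bounded operator on $\ell_2(T)$ of norm at most $2$, so $\lambda$ is a bounded representation on $\ell_2(T)\oplus\ell_2(T)$. *)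

From Stdlib Require Import Reals List.
Import ListNotations.
Open Scope R_scope.

Definition Cx : Type := (R * R)%type.
Definition C0 : Cx := (0, 0).
Definition Cadd (z w : Cx) : Cx := (fst z + fst w, snd z + snd w).
Definition Csub (z w : Cx) : Cx := (fst z - fst w, snd z - snd w).
Definition Cmul (z w : Cx) : Cx :=
  (fst z * fst w - snd z * snd w, fst z * snd w + snd z * fst w).
Definition Cnorm2 (z : Cx) : R := fst z * fst z + snd z * snd z.

(** * The tree T: reduced words in the generators a_1, a_2, ... of F_infinity *)
(** A letter (i, b) is a_i if b = true and a_i^{-1} if b = false. *)
Definition letter : Type := (nat * bool)%type.
Definition inv_pair (a b : letter) : bool :=
  Nat.eqb (fst a) (fst b) && xorb (snd a) (snd b).
Fixpoint reducedb (w : list letter) : bool :=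
  match w with
  | a :: ((b :: _) as w') => negb (inv_pair a b) && reducedb w'
  | _ => true
  end.
(** Vertices of T (words read left to right; the last letter is the rightmost). *)
Definition T : Type := { w : list letter | reducedb w = true }.
Definition word (t : T) : list letter := proj1_sig t.
Definition root : T := exist _ [] eq_refl.

Definition letter_eq_dec : forall a b : letter, {a = b} + {a <> b}.
Proof. decide equality; [apply Bool.bool_dec | apply PeanoNat.Nat.eq_dec]. Defined.
Definition word_eqb (v w : list letter) : bool :=
  if list_eq_dec letter_eq_dec v w then true else false.

Definition parentb (s t : T) : bool :=
  word_eqb (word s) (removelast (word t)) &&
  negb (match word t with [] => true | _ => false end).
Definition parent (s t : T) : Prop := parentb s t = true.
Definition adj (s t : T) : Prop := parent s t \/ parent t s.

Definition is_aut (g h : T -> T) : Prop :=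
  (forall t, g (h t) = t) /\ (forall t, h (g t) = t) /\
  (forall s t, adj s t <-> adj (g s) (g t)).

Definition V : Type := T -> Cx.
Definition vadd (x y : V) : V := fun t => Cadd (x t) (y t).
Definition vscale (c : Cx) (x : V) : V := fun t => Cmul c (x t).

Definition lsum (f : T -> R) (l : list T) : R := fold_right (fun t acc => f t + acc) 0 l.
Definition Csum (f : T -> Cx) (l : list T) : Cx := fold_right (fun t acc => Cadd (f t) acc) C0 l.

(** [sqsum_le x M] : ||x||_2^2 <= M  (the squared l_2 norm is the sup of finite partial sums). *)
Definition sqsum_le (x : V) (M : R) : Prop :=
  forall l : list T, NoDup l -> lsum (fun t => Cnorm2 (x t)) l <= M.
Definition l2 (x : V) : Prop := exists M, sqsum_le x M.
(** Hilbert direct sum l_2 (+) l_2 : ||x||^2 + ||y||^2 <= M *)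
Definition sqsum2_le (p : V * V) (M : R) : Prop :=
  forall l1 l2 : list T, NoDup l1 -> NoDup l2 ->
    lsum (fun t => Cnorm2 (fst p t)) l1 + lsum (fun t => Cnorm2 (snd p t)) l2 <= M.

Definition linear_l2 (A : V -> V) : Prop :=
  (forall x y, l2 x -> l2 y -> forall s, A (vadd x y) s = Cadd (A x s) (A y s)) /\
  (forall c x, l2 x -> forall s, A (vscale c x) s = Cmul c (A x s)).
Definition bounded_l2 (A : V -> V) : Prop :=
  exists K, forall x M, sqsum_le x M -> sqsum_le (A x) (K * M).

Definition linear_l2_2 (A : V -> V * V) : Prop :=
  linear_l2 (fun x => fst (A x)) /\ linear_l2 (fun x => snd (A x)).
Definition bounded_l2_2 (A : V -> V * V) : Prop :=
  exists K, forall x M, sqsum_le x M -> sqsum2_le (A x) (K * M).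

(** u(g) x = x o g^{-1} *)
Definition ug (h : T -> T) (x : V) : V := fun s => x (h s).

(** L on finitely supported vectors: L e_t = e_{\hat t}, L e_root = 0.
    For x supported in the duplicate-free list l: (L x)(s) = sum_{t in l, \hat t = s} x t. *)
Definition supported_in (x : V) (l : list T) : Prop := forall t, ~ In t l -> x t = C0.
Definition Lfs (l : list T) (x : V) : V :=
  fun s => Csum (fun t => if parentb s t then x t else C0) l.

(** [D g h] is the (Pytlik–Szwarc) bounded extension to l_2 of u(g)L - L u(g),
    g an automorphism with inverse h: it is linear, bounded on l_2 and agrees with
    u(g)L - Lu(g) on finitely supported vectors (a dense subspace, so the
    extension is unique). *)
Definition commutator_ext (D : (T -> T) -> (T -> T) -> V -> V) : Prop :=
  forall g h, is_aut g h ->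
    linear_l2 (D g h) /\ bounded_l2 (D g h) /\
    (forall (x : V) (l : list T), NoDup l -> supported_in x l ->
       forall s, D g h x s = Csub (ug h (Lfs l x) s) (Lfs (map g l) (ug h x) s)).

Definition lam (D : (T -> T) -> (T -> T) -> V -> V) (g h : T -> T) (p : V * V) : V * V :=
  (vadd (ug h (fst p)) (D g h (snd p)), ug h (snd p)).

Definition bounded_right_inverse (Rm : V -> V * V) : Prop :=
  linear_l2_2 Rm /\ bounded_l2_2 Rm /\ (forall y, l2 y -> forall s, snd (Rm y) s = y s).

Definition equivariant (D : (T -> T) -> (T -> T) -> V -> V) (Rm : V -> V * V) : Prop :=
  forall g h, is_aut g h -> forall y, l2 y -> forall s,
    fst (lam D g h (Rm y)) s = fst (Rm (ug h y)) s /\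
    snd (lam D g h (Rm y)) s = snd (Rm (ug h y)) s.

(* The zero section y |-> (0, y) splits the sequence as Banach spaces.  Suppose
   y |-> (P y, y) were a bounded G-equivariant section.  For indices i, j, the
   map g : w |-> a_i a_j phi(w), with phi the automorphism of F_infinity
   exchanging a_i and a_j^-1, is an involutive automorphism of T fixing a_i and
   exchanging the root with a_i a_j.  Equivariance at e_{a_i}, evaluated at
   a_i a_j, gives (P e_{a_i})(a_i a_j) = (P e_{a_i})(root) + 1 for every j; as
   P e_{a_i} is square-summable, (P e_{a_i})(root) = -1.  Hence the vector
   y_n = e_{a_0} + ... + e_{a_{n-1}}, of squared norm n, has |(P y_n)(root)| = n,
   so n^2 <= ||P||^2 n for all n, which is absurd. *)

From Stdlib Require Import Reals List PeanoNat.
From Stdlib Require Import Lra Lia FinFun FunctionalExtensionality Eqdep_dec.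
Import ListNotations.
Open Scope R_scope.
Arguments letter_eq_dec : simpl never.

Lemma T_eq (s t : T) : word s = word t -> s = t.
Proof.
  destruct s as [ws ps], t as [wt pt]; simpl; intros ->. f_equal.
  apply UIP_dec, Bool.bool_dec.
Qed.

Definition T_eq_dec (s t : T) : {s = t} + {s <> t}.
Proof.
  destruct (list_eq_dec letter_eq_dec (word s) (word t)) as [e|n].
  - left; apply T_eq, e.
  - right; intros ->; apply n; reflexivity.
Defined.

Definition swap_letter (i j : nat) (a : letter) : letter :=
  let (k, b) := a in
  if Nat.eqb k i then (j, negb b) else if Nat.eqb k j then (i, negb b) else (k, b).

Lemma swap_letter_involutive i j a : swap_letter i j (swap_letter i j a) = a.
Proof.
  destruct a as [k b]; unfold swap_letter.
  destruct (Nat.eqb_spec k i) as [->|Hki].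
  - destruct (Nat.eqb_spec j i) as [->|Hji]; [|rewrite Nat.eqb_refl];
      rewrite Bool.negb_involutive; reflexivity.
  - destruct (Nat.eqb_spec k j) as [->|Hkj].
    + rewrite Nat.eqb_refl, Bool.negb_involutive; reflexivity.
    + rewrite (proj2 (Nat.eqb_neq k i) Hki), (proj2 (Nat.eqb_neq k j) Hkj); reflexivity.
Qed.

Lemma swap_letter_inj i j a b : swap_letter i j a = swap_letter i j b -> a = b.
Proof.
  intros E; rewrite <- (swap_letter_involutive i j a), E; apply swap_letter_involutive.
Qed.

Lemma swap_letter_negb i j k b :
  swap_letter i j (k, negb b) =
  (fst (swap_letter i j (k, b)), negb (snd (swap_letter i j (k, b)))).
Proof. unfold swap_letter; destruct (Nat.eqb k i), (Nat.eqb k j); reflexivity. Qed.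

Lemma swap_letter_gen_i i j : swap_letter i j (i, true) = (j, false).
Proof. unfold swap_letter; rewrite Nat.eqb_refl; reflexivity. Qed.

Lemma swap_letter_gen_j i j : swap_letter i j (j, true) = (i, false).
Proof.
  unfold swap_letter; destruct (Nat.eqb_spec j i) as [->|_]; [|rewrite Nat.eqb_refl];
    reflexivity.
Qed.

Lemma inv_pair_spec a b : inv_pair a b = true <-> b = (fst a, negb (snd a)).
Proof.
  destruct a as [k b1], b as [l b2]; unfold inv_pair; simpl.
  rewrite Bool.andb_true_iff, Nat.eqb_eq.
  destruct b1, b2; simpl; split; intros H; try (destruct H; subst; congruence);
    inversion H; subst; auto.
Qed.

Lemma swap_letter_inv_pair i j a b :
  inv_pair (swap_letter i j a) (swap_letter i j b) = inv_pair a b.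
Proof.
  apply Bool.eq_iff_eq_true; rewrite !inv_pair_spec; destruct a as [k c].
  rewrite <- swap_letter_negb; cbn [fst snd].
  split; [apply swap_letter_inj|intros ->; reflexivity].
Qed.

Lemma reducedb_map_swap_letter i j w :
  reducedb (map (swap_letter i j) w) = reducedb w.
Proof.
  induction w as [|a [|b w] IH]; try reflexivity.
  change (negb (inv_pair (swap_letter i j a) (swap_letter i j b))
          && reducedb (map (swap_letter i j) (b :: w))
          = negb (inv_pair a b) && reducedb (b :: w))%bool.
  rewrite IH, swap_letter_inv_pair; reflexivity.
Qed.

Lemma reducedb_cons a v :
  reducedb (a :: v) = true <->
  reducedb v = true /\ hd_error v <> Some (fst a, negb (snd a)).
Proof.
  destruct v as [|c v]; [split; [split; [reflexivity|discriminate]|reflexivity]|].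
  change ((negb (inv_pair a c) && reducedb (c :: v))%bool = true <->
          reducedb (c :: v) = true /\ Some c <> Some (fst a, negb (snd a))).
  rewrite Bool.andb_true_iff, Bool.negb_true_iff, <- Bool.not_true_iff_false, inv_pair_spec.
  split; intros [H1 H2]; split; try assumption.
  - intros E; apply H1; injection E as E; exact E.
  - intros ->; apply H2; reflexivity.
Qed.

(* [flip_word i j w] is the reduced form of [a_i a_j phi(w)], where phi is the
   automorphism of F_infinity with a_i |-> a_j^-1, a_j |-> a_i^-1; since
   phi(a_i a_j) = (a_i a_j)^-1, the map is an involution. *)
Definition flip_word (i j : nat) (w : list letter) : list letter :=
  match w with
  | a :: b :: v =>
      if letter_eq_dec a (i, true) then
        if letter_eq_dec b (j, true) then map (swap_letter i j) v
        else (i, true) :: map (swap_letter i j) (b :: v)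
      else (i, true) :: (j, true) :: map (swap_letter i j) w
  | [a] =>
      if letter_eq_dec a (i, true) then [(i, true)]
      else (i, true) :: (j, true) :: map (swap_letter i j) w
  | [] => [(i, true); (j, true)]
  end.

Lemma flip_word_far i j w :
  hd_error w <> Some (i, true) ->
  flip_word i j w = (i, true) :: (j, true) :: map (swap_letter i j) w.
Proof.
  intros Hw; destruct w as [|a [|b v]]; try reflexivity; cbn [hd_error] in Hw;
    unfold flip_word; destruct (letter_eq_dec a (i, true)) as [->|_]; congruence.
Qed.

Lemma flip_word_near i j v :
  hd_error v <> Some (j, true) ->
  flip_word i j ((i, true) :: v) = (i, true) :: map (swap_letter i j) v.
Proof.
  intros Hv; destruct v as [|b v]; unfold flip_word;
    destruct (letter_eq_dec (i, true) (i, true)) as [_|]; try reflexivity; try congruence.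
  destruct (letter_eq_dec b (j, true)) as [->|_]; [now contradiction Hv|reflexivity].
Qed.

Lemma flip_word_cancel i j v :
  flip_word i j ((i, true) :: (j, true) :: v) = map (swap_letter i j) v.
Proof.
  unfold flip_word; destruct (letter_eq_dec (i, true) (i, true)) as [_|]; [|congruence].
  destruct (letter_eq_dec (j, true) (j, true)) as [_|]; congruence.
Qed.

Lemma hd_error_map_swap_letter i j v a :
  hd_error v <> Some (swap_letter i j a) ->
  hd_error (map (swap_letter i j) v) <> Some a.
Proof.
  destruct v as [|c v]; simpl; [congruence|].
  intros Hc E; apply Hc; injection E as <-; rewrite swap_letter_involutive; reflexivity.
Qed.

Lemma map_swap_letter_involutive i j w :
  map (swap_letter i j) (map (swap_letter i j) w) = w.
Proof.
  rewrite map_map, <- map_id; apply map_ext; intros; apply swap_letter_involutive.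
Qed.

Lemma hd_error_dec (w : list letter) a : {v | w = a :: v} + {hd_error w <> Some a}.
Proof.
  destruct w as [|c v]; [right; discriminate|].
  destruct (letter_eq_dec c a) as [->|Hc]; [left; exists v; reflexivity|].
  right; simpl; congruence.
Qed.

Lemma flip_word_involutive i j w :
  reducedb w = true -> flip_word i j (flip_word i j w) = w.
Proof.
  intros Hw; destruct (hd_error_dec w (i, true)) as [[v ->]|Hi].
  - destruct (hd_error_dec v (j, true)) as [[u ->]|Hj].
    + rewrite flip_word_cancel, flip_word_far, map_swap_letter_involutive; [reflexivity|].
      apply hd_error_map_swap_letter; rewrite swap_letter_gen_i.
      apply reducedb_cons in Hw as [Hw _]; apply reducedb_cons in Hw; tauto.
    + rewrite flip_word_near, flip_word_near, map_swap_letter_involutive by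
        (try exact Hj; apply hd_error_map_swap_letter; rewrite swap_letter_gen_j;
         apply reducedb_cons in Hw; tauto).
      reflexivity.
  - rewrite (flip_word_far i j w Hi), flip_word_cancel, map_swap_letter_involutive.
    reflexivity.
Qed.

Lemma flip_word_reduced i j w : reducedb w = true -> reducedb (flip_word i j w) = true.
Proof.
  intros Hw; destruct (hd_error_dec w (i, true)) as [[v ->]|Hi].
  - apply reducedb_cons in Hw as [Hv _].
    destruct (hd_error_dec v (j, true)) as [[u ->]|Hj].
    + rewrite flip_word_cancel, reducedb_map_swap_letter.
      apply reducedb_cons in Hv; tauto.
    + rewrite flip_word_near by exact Hj.
      apply reducedb_cons; rewrite reducedb_map_swap_letter; split; [exact Hv|].
      apply hd_error_map_swap_letter.
      cbn [fst snd negb]; rewrite <- (swap_letter_gen_j i j), swap_letter_involutive; exact Hj.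
  - rewrite flip_word_far by exact Hi.
    apply reducedb_cons; split; [|discriminate].
    apply reducedb_cons; rewrite reducedb_map_swap_letter; split; [exact Hw|].
    apply hd_error_map_swap_letter.
    cbn [fst snd negb]; rewrite <- (swap_letter_gen_i i j), swap_letter_involutive; exact Hi.
Qed.

Lemma flip_word_snoc i j s x :
  flip_word i j (s ++ [x]) = flip_word i j s ++ [swap_letter i j x] \/
  exists y, flip_word i j s = flip_word i j (s ++ [x]) ++ [y].
Proof.
  destruct s as [|a [|b v]]; simpl.
  - destruct (letter_eq_dec x (i, true)) as [->|_]; [right; exists (j, true)|left];
      reflexivity.
  - destruct (letter_eq_dec a (i, true)) as [_|_]; [|left; reflexivity].
    destruct (letter_eq_dec x (j, true)) as [_|_]; [right; exists (i, true)|left];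
      reflexivity.
  - left; destruct (letter_eq_dec a (i, true)), (letter_eq_dec b (j, true));
      rewrite ?map_app; reflexivity.
Qed.

Definition flip (i j : nat) (t : T) : T :=
  exist _ (flip_word i j (word t)) (flip_word_reduced i j (word t) (proj2_sig t)).

Lemma flip_involutive i j t : flip i j (flip i j t) = t.
Proof. apply T_eq, flip_word_involutive, (proj2_sig t). Qed.

Lemma word_eqb_spec v w : word_eqb v w = true <-> v = w.
Proof. unfold word_eqb; destruct (list_eq_dec letter_eq_dec v w); split; congruence. Qed.

Lemma parent_spec s t : parent s t <-> exists x, word t = word s ++ [x].
Proof.
  unfold parent, parentb; rewrite Bool.andb_true_iff, word_eqb_spec; split.
  - intros [H1 H2]; destruct (word t) as [|x l]; [discriminate|].
    exists (last (x :: l) x); rewrite H1; apply app_removelast_last; discriminate.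
  - intros [x ->]; rewrite removelast_last; split; [reflexivity|].
    destruct (word s); reflexivity.
Qed.

Lemma flip_adj i j s t : adj s t -> adj (flip i j s) (flip i j t).
Proof.
  assert (Hparent : forall u v, parent u v -> adj (flip i j u) (flip i j v)).
  { intros u v [x Hx]%parent_spec; unfold adj; rewrite !parent_spec; simpl; rewrite Hx.
    destruct (flip_word_snoc i j (word u) x) as [E|[y E]]; [left|right]; eauto. }
  intros [H|H]; [|apply or_comm]; exact (Hparent _ _ H).
Qed.

Lemma flip_is_aut i j : is_aut (flip i j) (flip i j).
Proof.
  split; [|split]; [intros; apply flip_involutive ..|].
  intros s t; split; [apply flip_adj|].
  intros H%(flip_adj i j); rewrite !flip_involutive in H; exact H.
Qed.

Definition gen (k : nat) : T := exist _ [(k, true)] eq_refl.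

Lemma gen2_reduced i j : reducedb [(i, true); (j, true)] = true.
Proof. simpl; unfold inv_pair; simpl; rewrite Bool.andb_false_r; reflexivity. Qed.

Definition gen2 (i j : nat) : T := exist _ [(i, true); (j, true)] (gen2_reduced i j).

Lemma flip_gen i j : flip i j (gen i) = gen i.
Proof.
  apply T_eq; simpl; destruct (letter_eq_dec (i, true) (i, true)); congruence.
Qed.

Lemma flip_gen2 i j : flip i j (gen2 i j) = root.
Proof. apply T_eq, flip_word_cancel. Qed.

Definition indicator (p : T -> bool) : V := fun s => if p s then (1, 0) else C0.

Definition delta (t : T) : V := indicator (fun s => if T_eq_dec s t then true else false).

Definition is_gen_below (n : nat) (s : T) : bool :=
  match word s with [(k, true)] => Nat.ltb k n | _ => false end.

Definition first_gens (n : nat) : V := indicator (is_gen_below n).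

Lemma lsum_Cnorm2_indicator p l :
  lsum (fun t => Cnorm2 (indicator p t)) l = INR (length (filter p l)).
Proof.
  induction l as [|a l IH]; [reflexivity|]; unfold lsum in *; cbn [fold_right filter].
  rewrite IH; unfold indicator, Cnorm2; destruct (p a); cbn [length fst snd C0];
    [rewrite S_INR|]; lra.
Qed.

Lemma sqsum_le_indicator p S :
  (forall s, p s = true -> In s S) -> sqsum_le (indicator p) (INR (length S)).
Proof.
  intros HS l Hl; rewrite lsum_Cnorm2_indicator; apply le_INR, NoDup_incl_length.
  - apply NoDup_filter, Hl.
  - intros x Hx; apply filter_In in Hx; apply HS; tauto.
Qed.

Lemma sqsum_le_delta t : sqsum_le (delta t) 1.
Proof.
  change 1 with (INR (length [t])); apply sqsum_le_indicator; intros s Hs.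
  destruct (T_eq_dec s t); [left; auto|discriminate].
Qed.

Lemma sqsum_le_first_gens n : sqsum_le (first_gens n) (INR n).
Proof.
  replace (INR n) with (INR (length (map gen (seq 0 n))))
    by (rewrite length_map, length_seq; reflexivity).
  apply sqsum_le_indicator; intros s; unfold is_gen_below.
  destruct (word s) as [|[k []] [|? ?]] eqn:Ew; try discriminate.
  intros Hk%Nat.ltb_lt; apply in_map_iff; exists k; split.
  - apply T_eq; simpl; auto.
  - apply in_seq; lia.
Qed.

Lemma first_gens_0 s : first_gens 0 s = C0.
Proof.
  unfold first_gens, indicator, is_gen_below.
  destruct (word s) as [|[k []] [|? ?]]; reflexivity.
Qed.

Lemma is_gen_below_S n s : s <> gen n -> is_gen_below (S n) s = is_gen_below n s.
Proof.
  intros Hs; unfold is_gen_below; destruct (word s) as [|[k []] [|? ?]] eqn:Ew; auto.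
  assert (k <> n) by (intros ->; apply Hs, T_eq; simpl; auto).
  destruct (Nat.ltb_spec k n), (Nat.ltb_spec k (S n)); auto; lia.
Qed.

Lemma first_gens_S n : first_gens (S n) = vadd (first_gens n) (delta (gen n)).
Proof.
  apply functional_extensionality; intros s; unfold first_gens, vadd, delta, indicator.
  destruct (T_eq_dec s (gen n)) as [->|Hs].
  - unfold is_gen_below; simpl.
    rewrite Nat.ltb_irrefl, (proj2 (Nat.ltb_lt n (S n))) by lia.
    unfold Cadd, C0; simpl; f_equal; ring.
  - rewrite is_gen_below_S by exact Hs.
    destruct (is_gen_below n s); unfold Cadd, C0; simpl; f_equal; ring.
Qed.

Lemma ug_delta g h t : is_aut g h -> ug h (delta t) = delta (g t).
Proof.
  intros [Hgh [Hhg _]]; apply functional_extensionality; intros s.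
  unfold ug, delta, indicator.
  destruct (T_eq_dec (h s) t) as [Hs|Hs], (T_eq_dec s (g t)) as [Hs'|Hs']; auto.
  - contradiction Hs'; rewrite <- Hs; symmetry; apply Hgh.
  - contradiction Hs; rewrite Hs'; apply Hhg.
Qed.

Lemma delta_supported t : supported_in (delta t) [t].
Proof.
  intros s Hs; unfold delta, indicator.
  destruct (T_eq_dec s t) as [->|]; [contradiction Hs; left|]; reflexivity.
Qed.

Lemma Lfs_delta t s : Lfs [t] (delta t) s = if parentb s t then (1, 0) else C0.
Proof.
  unfold Lfs, Csum, delta, indicator; simpl.
  destruct (T_eq_dec t t); [|congruence].
  destruct (parentb s t); unfold Cadd, C0; simpl; f_equal; ring.
Qed.

Lemma Cnorm2_ge_re z : fst z * fst z <= Cnorm2 z.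
Proof. unfold Cnorm2; nra. Qed.

Lemma lsum_lower_bound f l q :
  (forall t, In t l -> q <= f t) -> INR (length l) * q <= lsum f l.
Proof.
  induction l as [|a l IH]; intros H; [simpl; lra|].
  assert (Ha := H a (or_introl eq_refl)).
  assert (Hl : INR (length l) * q <= lsum f l) by (apply IH; intros; apply H; right; auto).
  change (INR (S (length l)) * q <= f a + lsum f l); rewrite S_INR; lra.
Qed.

Lemma sqsum_le_injective_lower_bound (x : V) M q (f : nat -> T) :
  Injective f -> (forall n, q <= Cnorm2 (x (f n))) -> sqsum_le x M -> q <= 0.
Proof.
  intros Hf Hq Hx; destruct (Rle_or_lt q 0) as [|Hpos]; [assumption|exfalso].
  destruct (INR_unbounded (M / q)) as [N HN].
  assert (HNM : INR N * q <= M).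
  { rewrite <- (length_seq N 0), <- (length_map f).
    eapply Rle_trans; [|apply Hx, Injective_map_NoDup, seq_NoDup; exact Hf].
    apply lsum_lower_bound; intros t [n [<- _]]%in_map_iff; apply Hq. }
  apply (Rmult_lt_compat_r q) in HN; [|exact Hpos].
  unfold Rdiv in HN; rewrite Rmult_assoc, Rinv_l in HN; lra.
Qed.

Lemma sqsum2_le_fst p M : sqsum2_le p M -> sqsum_le (fst p) M.
Proof. intros H l Hl; specialize (H l [] Hl (NoDup_nil _)); simpl in H; lra. Qed.

Lemma not_quadratic_le_linear K : ~ (forall n, INR n * INR n <= K * INR n).
Proof.
  intros H; destruct (INR_unbounded (Rabs K)) as [n Hn]; specialize (H n).
  pose proof (Rle_abs K); pose proof (Rabs_pos K).
  assert (0 < (INR n - Rabs K) * INR n) by (apply Rmult_lt_0_compat; lra).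
  nra.
Qed.

Lemma linear_l2_zero A x :
  linear_l2 A -> l2 x -> (forall t, x t = C0) -> forall s, A x s = C0.
Proof.
  intros [_ Hsc] Hx H0 s.
  assert (Ex : x = vscale C0 x).
  { apply functional_extensionality; intros t; unfold vscale; rewrite H0.
    unfold Cmul, C0; simpl; f_equal; ring. }
  rewrite Ex, (Hsc C0 x Hx s); unfold Cmul, C0; simpl; f_equal; ring.
Qed.

Lemma zero_section_bounded_right_inverse :
  bounded_right_inverse (fun y => (fun _ => C0, y)).
Proof.
  split; [|split].
  - split; split; intros; simpl; try reflexivity; unfold Cadd, Cmul, C0; simpl;
      f_equal; ring.
  - exists 1; intros x M HM l1 l2 N1 N2; simpl.
    assert (E : lsum (fun _ => Cnorm2 C0) l1 = 0).
    { induction l1 as [|a l1 IH]; [reflexivity|]; inversion N1; subst.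
      unfold lsum in *; simpl; rewrite IH by assumption; unfold Cnorm2, C0; simpl; ring. }
    specialize (HM l2 N2); lra.
  - reflexivity.
Qed.

Section NoEquivariantSection.

Variable D : (T -> T) -> (T -> T) -> V -> V.
Hypothesis HD : commutator_ext D.
Variable Rm : V -> V * V.
Hypothesis HRm : bounded_right_inverse Rm.
Hypothesis HRm_equiv : equivariant D Rm.

Lemma commutator_ext_delta g h t s :
  is_aut g h ->
  D g h (delta t) s =
  Csub (if parentb (h s) t then (1, 0) else C0) (if parentb s (g t) then (1, 0) else C0).
Proof.
  intros Hg; destruct (HD g h Hg) as [_ [_ Hfs]].
  rewrite (Hfs (delta t) [t]) by
    (exact (NoDup_cons _ (@in_nil _ t) (NoDup_nil _)) || apply delta_supported).
  unfold ug at 1; rewrite Lfs_delta; simpl map; rewrite (ug_delta g h t Hg), Lfs_delta.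
  reflexivity.
Qed.

Lemma section_delta_shift g h t s :
  is_aut g h -> g t = t ->
  fst (Rm (delta t)) s = Cadd (fst (Rm (delta t)) (h s)) (D g h (delta t) s).
Proof.
  intros Hg Ht; destruct HRm as [_ [_ Hsnd]].
  assert (Hl2 : l2 (delta t)) by (exists 1; apply sqsum_le_delta).
  assert (Hsnd_delta : snd (Rm (delta t)) = delta t)
    by (apply functional_extensionality; intros; apply Hsnd, Hl2).
  destruct (HRm_equiv g h Hg (delta t) Hl2 s) as [E _].
  unfold lam in E; cbn [fst snd] in E.
  rewrite Hsnd_delta, (ug_delta g h t Hg), Ht in E; unfold vadd, ug in E.
  exact (eq_sym E).
Qed.

Lemma section_gen_step i j :
  fst (fst (Rm (delta (gen i))) (gen2 i j)) = fst (fst (Rm (delta (gen i))) root) + 1.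
Proof.
  rewrite (section_delta_shift _ _ _ (gen2 i j) (flip_is_aut i j) (flip_gen i j)).
  rewrite (commutator_ext_delta _ _ _ _ (flip_is_aut i j)), flip_gen2, flip_gen.
  assert (Hroot : parentb root (gen i) = true) by reflexivity.
  assert (Hgen2 : parentb (gen2 i j) (gen i) = false) by reflexivity.
  rewrite Hroot, Hgen2; unfold Cadd, Csub, C0; simpl; lra.
Qed.

Lemma section_gen_root i : fst (fst (Rm (delta (gen i))) root) = -1.
Proof.
  destruct HRm as [_ [[K HK] _]].
  set (p := fst (fst (Rm (delta (gen i))) root)).
  assert (Hq : (p + 1) * (p + 1) <= 0).
  { apply (sqsum_le_injective_lower_bound (fst (Rm (delta (gen i)))) (K * 1) _ (gen2 i)).
    - intros j k E; apply (f_equal word) in E; simpl in E; congruence.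
    - intros j; eapply Rle_trans; [|apply Cnorm2_ge_re].
      rewrite section_gen_step; apply Rle_refl.
    - apply sqsum2_le_fst, HK, sqsum_le_delta. }
  nra.
Qed.

Lemma section_first_gens_root n : fst (fst (Rm (first_gens n)) root) = - INR n.
Proof.
  destruct HRm as [[Hlin _] _]; pose proof Hlin as [Hadd _].
  induction n as [|n IH].
  - pose proof (linear_l2_zero _ _ Hlin (ex_intro _ _ (sqsum_le_first_gens 0))
                  first_gens_0 root) as E.
    cbv beta in E; rewrite E; simpl; lra.
  - rewrite first_gens_S.
    rewrite (Hadd _ _ (ex_intro _ _ (sqsum_le_first_gens n))
                  (ex_intro _ _ (sqsum_le_delta (gen n))) root).
    unfold Cadd; cbn [fst]; rewrite IH, section_gen_root, S_INR; lra.
Qed.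

Lemma no_equivariant_section : False.
Proof.
  destruct HRm as [_ [[K HK] _]].
  apply (not_quadratic_le_linear K); intros n.
  pose proof (sqsum2_le_fst _ _ (HK _ _ (sqsum_le_first_gens n)) [root]
                (NoDup_cons _ (@in_nil _ root) (NoDup_nil _))) as Hn.
  unfold lsum in Hn; simpl in Hn.
  pose proof (Cnorm2_ge_re (fst (Rm (first_gens n)) root)) as Hre.
  rewrite section_first_gens_root in Hre; lra.
Qed.

End NoEquivariantSection.

Theorem mainTheorem17 (D : (T -> T) -> (T -> T) -> V -> V) (HD : commutator_ext D) :
  (exists Rm : V -> V * V, bounded_right_inverse Rm) /\
  ~ (exists Rm : V -> V * V, bounded_right_inverse Rm /\ equivariant D Rm).
Proof.
  split.
  - exists (fun y => (fun _ => C0, y)); apply zero_section_bounded_right_inverse.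
  - intros [Rm [HRm HRm_equiv]]; exact (no_equivariant_section D HD Rm HRm HRm_equiv).
Qed.
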